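(* Let $X_1,X_2\subset\mathbb{R}$ be endowed with the Borel $\sigma$-algebra $\mathcal{B}$, and let $(X_1,\mathcal{B},\mu_1,f_1)$ and $(X_2,\mathcal{B},\mu_2,f_2)$ be measure-preserving dynamical systems that are isomorphic via a continuous map $\phi:X_1\to X_2$ (so $\phi\circ f_1=f_2\circ\phi$). Suppose $f_1$ is topologically transitive and that, for all $x\in X_1$, the points $x$ (under $f_1$) and $\phi(x)$ (under $f_2$) define the same order patterns. Then $\phi$ is order-preserving, i.e. $x<x'$ in $X_1$ implies $\phi(x)<\phi(x')$.
   Context: For a map $T:X\to X$ on a totally ordered set and $L\geq 2$, a point $x$ defines the order pattern $\pi=[\pi_0,\dots,\pi_{L-1}]$ (a permutation of $\{0,\dots,L-1\}$) if $T^{\pi_0}(x)<T^{\pi_1}(x)<\dots<T^{\pi_{L-1}}(x)$. ''$x$ and $\phi(x)$ define the same order patterns'' means that for every $L\geq2$ and every permutation $\pi$ of $\{0,\dots,L-1\}$, $x$ defines $\pi$ under $f_1$ if and only if $\phi(x)$ defines $\pi$ under $f_2$. *)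

(* The canonical sigma-algebra on R (lebesgue_stieltjes_measure.v) is the one
   generated by half-open intervals, i.e. the Borel sigma-algebra. *)
From HB Require Import structures.
From mathcomp Require Import all_boot all_order all_algebra all_fingroup.
From mathcomp Require Import all_classical all_reals all_analysis.
Set Implicit Arguments. Unset Strict Implicit. Unset Printing Implicit Defensive.
Import Order.TTheory GRing.Theory Num.Theory.
Import numFieldNormedType.Exports.
Local Open Scope classical_set_scope.
Local Open Scope ring_scope.

Section defs.
Variable R : realType.

Definition defines_pattern (T : R -> R) (x : R) (L : nat) (pi : 'S_L) : Prop :=
  sorted <%R [seq iter (pi i) T x | i <- enum 'I_L].

Definition same_order_patterns (T1 T2 : R -> R) (x y : R) : Prop :=
  forall (L : nat), (2 <= L)%N -> forall pi : 'S_L,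
    defines_pattern T1 x pi <-> defines_pattern T2 y pi.

Definition rel_open (X U : set R) : Prop :=
  exists O : set R, open O /\ U = X `&` O.

Definition top_transitive (X : set R) (f : R -> R) : Prop :=
  forall U V : set R, rel_open X U -> rel_open X V ->
    U !=set0 -> V !=set0 ->
    exists n : nat, (1 <= n)%N /\ (iter n f @` U) `&` V !=set0.

(* (X, Borel, mu, f) is a measure-preserving dynamical system; mu is taken as
   a measure on Borel sets of R, and the system's measure is its trace on X,
   i.e. A |-> mu (X `&` A) for Borel A. *)
Definition mpds (X : set R) (mu : {measure set R -> \bar R}) (f : R -> R) : Prop :=
  [/\ set_fun X X f,
      measurable_fun X f &
      forall A : set R, measurable A ->
        mu (X `&` f @^-1` A) = mu (X `&` A)].

Definition mpds_iso (X1 X2 : set R) (mu1 mu2 : {measure set R -> \bar R})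
    (f1 f2 : R -> R) (phi : R -> R) : Prop :=
  [/\ set_fun X1 X2 phi,
      measurable_fun X1 phi,
      (exists psi : R -> R,
         [/\ set_fun X2 X1 psi, measurable_fun X2 psi,
             {in X1, cancel phi psi} & {in X2, cancel psi phi}]),
      (forall A : set R, measurable A ->
         mu1 (X1 `&` phi @^-1` A) = mu2 (X2 `&` A)) &
      {in X1, forall x, phi (f1 x) = f2 (phi x)}].

End defs.

From HB Require Import structures.
From mathcomp Require Import all_boot all_order all_algebra all_fingroup.
From mathcomp Require Import all_classical all_reals all_analysis.
From mathcomp Require Import zify lra.
Set Implicit Arguments. Unset Strict Implicit.
Import Order.TTheory GRing.Theory Num.Theory.
Import numFieldNormedType.Exports.
Local Open Scope classical_set_scope.
Local Open Scope ring_scope.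

(* Comparing x with f^n x is an order pattern of the orbit of x, so the
   hypothesis turns x < f^n x into phi x < phi (f^n x) (conjugacy identifies
   the orbit of phi x with the image of the orbit of x).  If phi reversed some
   pair x < x', continuity would give neighbourhoods of x and x' mapped into
   disjoint intervals in reversed order, and topological transitivity yields y
   near x with f^n y near x'; then y < f^n y while phi (f^n y) < phi y. *)

Section OrderPatterns.
Variable R : realType.
Implicit Types (T : R -> R) (x : R).

Lemma defines_pattern_lt T x L (pi : 'S_L) (i j : 'I_L) :
  defines_pattern T x pi -> (i < j)%N -> iter (pi i) T x < iter (pi j) T x.
Proof.
move=> x_pat ij.
have := @sorted_ltn_nth _ _ lt_trans x _ x_pat i j.
rewrite !inE size_map size_enum_ord !ltn_ord => /(_ isT isT ij).
by rewrite !(nth_map i) -?enumT ?size_enum_ord // !nth_ord_enum.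
Qed.

(* The permutation sorting the first L iterates. *)
Lemma exists_defines_pattern T x L :
  uniq [seq iter i T x | i <- iota 0 L] -> exists pi : 'S_L, defines_pattern T x pi.
Proof.
move=> orbit_uniq.
pose t := [tuple iter (val i) T x | i < L].
have size_sorted : size (sort <=%R (val t)) == L by rewrite size_sort size_tuple.
have : perm_eq (Tuple size_sorted) t by rewrite /= perm_sort.
move/tuple_permP => [pi sort_perm]; exists pi; rewrite /defines_pattern.
have -> : [seq iter (pi i) T x | i <- enum 'I_L] = sort <=%R (val t).
  have -> : sort <=%R (val t) = [seq tnth t (pi i) | i <- ord_tuple L].
    exact: sort_perm.
  by rewrite val_ord_tuple; apply: eq_map => i /=; rewrite tnth_mktuple.
rewrite sort_lt_sorted /= -val_ord_tuple.
by rewrite -(val_enum_ord L) -map_comp in orbit_uniq.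
Qed.

(* Take L least with m < L or f^L x among the earlier iterates; in the second
   case the orbit is eventually periodic and every iterate is some f^k x, k < L. *)
Lemma orbit_prefix_uniq T x m : exists L,
  uniq [seq iter i T x | i <- iota 0 L] /\
  exists2 k, (k < L)%N & iter k T x = iter m T x.
Proof.
pose P n := (m < n)%N || (iter n T x \in [seq iter i T x | i <- iota 0 n]).
have exP : exists n, P n by exists m.+1; rewrite /P ltnSn.
have [L PL Lmin] := ex_minnP exP.
exists L; split.
  suff prefix_uniq n : (n <= L)%N -> uniq [seq iter i T x | i <- iota 0 n].
    exact: prefix_uniq.
  elim: n => [//|n IH] nL.
  rewrite -addn1 iotaD map_cat cat_uniq IH ?(ltnW nL) //= andbT orbF.
  have : ~~ P n by apply/negP => /Lmin; rewrite leqNgt nL.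
  by rewrite /P negb_or => /andP[_].
case/orP: PL => [mL|/mapP [i0]]; first by exists m.
rewrite mem_iota add0n => /andP[_ i0L] iterL.
suff periodic n : exists2 k, (k < L)%N & iter k T x = iter n T x by exact: periodic.
elim/ltn_ind: n => n IH.
have [nL|Ln] := ltnP n L; first by exists n.
rewrite -(subnK Ln) iterD iterL -iterD; apply: IH.
have : (0 < L)%N by apply: leq_ltn_trans i0L.
lia.
Qed.

Lemma same_order_patterns_lt_iter T1 T2 (g : R -> R) x y m :
  same_order_patterns T1 T2 x y -> (forall k, iter k T2 y = g (iter k T1 x)) ->
  x < iter m T1 x -> y < iter m T2 y.
Proof.
move=> same_pat orbit_image xm.
have [L [orbit_uniq [k kL iter_k]]] := orbit_prefix_uniq T1 x m.
have k0 : k != 0%N by apply: contraTneq xm => k0; rewrite -iter_k k0 ltxx.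
have L2 : (2 <= L)%N by rewrite (leq_ltn_trans _ kL) // lt0n.
have [pi x_pat] := exists_defines_pattern orbit_uniq.
have y_pat := (same_pat L L2 pi).1 x_pat.
pose o0 := Ordinal (leq_trans (isT : (0 < 2)%N) L2); pose ok := Ordinal kL.
have pi_o0 : pi ((pi^-1)%g o0) = o0 by rewrite permKV.
have pi_ok : pi ((pi^-1)%g ok) = ok by rewrite permKV.
(* The common pattern decides how the 0-th and k-th iterates compare. *)
case: (ltngtP ((pi^-1)%g o0) ((pi^-1)%g ok)) => pos.
- have := defines_pattern_lt y_pat pos.
  by rewrite pi_o0 pi_ok /= orbit_image iter_k -orbit_image.
- have := defines_pattern_lt x_pat pos; rewrite pi_o0 pi_ok /= iter_k.
  by move/(lt_trans xm); rewrite ltxx.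
- have : o0 = ok by rewrite -pi_o0 -pi_ok; congr (pi _); apply: val_inj.
  by move/(congr1 val) => /= /esym/eqP; rewrite (negbTE k0).
Qed.

End OrderPatterns.

Section Topology.
Variable R : realType.
Implicit Types (X : set R) (f : R -> R).

Lemma within_continuous_ball X f x e :
  {within X, continuous f} -> X x -> 0 < e ->
  exists2 d, 0 < d & forall y, X y -> `|x - y| < d -> `|f x - f y| < e.
Proof.
move=> f_cont Xx e0.
have /cvgrPdist_lt/(_ e e0) := (@subspace_continuousP _ X _ f).1 f_cont x Xx.
rewrite near_withinE => /nbhs_ballP [d /= d0 Hd].
by exists d => // y Xy xy; apply: Hd.
Qed.

Lemma top_transitive_visit X f x x' d :
  top_transitive X f -> X x -> X x' -> 0 < d ->
  exists y n, [/\ X y, `|x - y| < d & `|x' - iter n f y| < d].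
Proof.
move=> f_trans Xx Xx' d0.
have open_ball z : rel_open X (X `&` ball z d).
  by exists (ball z d); split; first exact: ball_open.
have nonempty_ball z : X z -> X `&` ball z d !=set0.
  by exists z; split; last exact: ballxx.
have [n [_ [_ [[y [Xy By] <-] [_ Bz]]]]] :=
  f_trans _ _ (open_ball x) (open_ball x') (nonempty_ball x Xx) (nonempty_ball x' Xx').
by exists y, n; split; rewrite // -ball_normE.
Qed.

End Topology.

Section Conjugacy.
Variables (R : realType) (X1 : set R) (f1 f2 phi : R -> R).
Hypothesis f1_X1 : set_fun X1 X1 f1.
Hypothesis phi_conj : {in X1, forall x, phi (f1 x) = f2 (phi x)}.

Lemma iter_set_fun n x : X1 x -> X1 (iter n f1 x).
Proof. by elim: n => [//|n IH] Xx /=; apply/f1_X1/IH. Qed.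

Lemma iter_conj n x : X1 x -> phi (iter n f1 x) = iter n f2 (phi x).
Proof.
elim: n => [//|n IH] Xx /=.
by rewrite phi_conj ?IH //; apply/mem_set/iter_set_fun.
Qed.

Lemma conj_lt_iter x n :
  X1 x -> same_order_patterns f1 f2 x (phi x) ->
  x < iter n f1 x -> phi x < phi (iter n f1 x).
Proof.
move=> Xx same_pat xn; rewrite iter_conj //.
apply: (same_order_patterns_lt_iter (g := phi) same_pat _ xn) => k.
by rewrite iter_conj.
Qed.

End Conjugacy.

Theorem proposition2 (R : realType) (X1 X2 : set R)
    (mu1 mu2 : {measure set R -> \bar R}) (f1 f2 phi : R -> R) :
  mpds X1 mu1 f1 -> mpds X2 mu2 f2 ->
  mpds_iso X1 X2 mu1 mu2 f1 f2 phi ->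
  {within X1, continuous phi} ->
  top_transitive X1 f1 ->
  (forall x, X1 x -> same_order_patterns f1 f2 x (phi x)) ->
  forall x x', X1 x -> X1 x' -> x < x' -> phi x < phi x'.
Proof.
move=> [f1_X1 _ _] _ [_ _ [psi [_ _ phiK _]] _ phi_conj] phi_cont f1_trans same_pat
  x x' Xx Xx' xx'.
have phi_neq : phi x != phi x'.
  apply: contraTneq xx' => /(congr1 psi); rewrite !phiK ?inE // => ->.
  by rewrite ltxx.
case: ltgtP phi_neq => // phi_rev _.
have e_gt0 : 0 < (phi x - phi x') / 2 by lra.
have [d1 d1_gt0 near_x] := within_continuous_ball phi_cont Xx e_gt0.
have [d2 d2_gt0 near_x'] := within_continuous_ball phi_cont Xx' e_gt0.
have d_gt0 : 0 < Num.min (Num.min d1 d2) ((x' - x) / 2).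
  by rewrite !lt_min d1_gt0 d2_gt0 /=; lra.
have [y [n [Xy]]] := top_transitive_visit f1_trans Xx Xx' d_gt0.
rewrite !lt_min => /andP[/andP[y_d1 _] y_mid] /andP[/andP[_ yn_d2] yn_mid].
have y_lt : y < iter n f1 y.
  by move: y_mid yn_mid; rewrite !ltr_norml => /andP[? ?] /andP[? ?]; lra.
have := conj_lt_iter f1_X1 phi_conj Xy (same_pat y Xy) y_lt.
move: (near_x y Xy y_d1) (near_x' _ (iter_set_fun f1_X1 n Xy) yn_d2).
by rewrite !ltr_norml => /andP[? ?] /andP[? ?]; lra.
Qed.
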